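(* Let $(X,d)$ be a metric space and let $u,u_1,u_2,\ldots\in F_{USC}(X)$. If $H_{\rm end}(u_n,u)\to0$, then $H([u_n]_\alpha,[u]_\alpha)\to0$ for each $\alpha\in(0,1)\setminus P_0(u)$.
   Context: A fuzzy set on $X$ is a function $u:X\to[0,1]$, with $\alpha$-cuts $[u]_\alpha=\{x: u(x)\ge\alpha\}$ for $\alpha\in(0,1]$ and $[u]_0=\overline{\{u>0\}}$. $F_{USC}(X)$ is the set of fuzzy sets with all $\alpha$-cuts ($\alpha\in[0,1]$) non-empty and closed. For non-empty closed sets $U,V$ in a metric space $(Y,\rho)$, $H(U,V)=\max\{\sup_{a\in U}\inf_{b\in V}\rho(a,b),\sup_{b\in V}\inf_{a\in U}\rho(a,b)\}$. $X\times[0,1]$ is metrized by $\overline{d}((x,\alpha),(y,\beta))=d(x,y)+|\alpha-\beta|$, ${\rm end}\,u=\{(x,t)\in X\times[0,1]: u(x)\ge t\}$, $H_{\rm end}(u,v)=H({\rm end}\,u,{\rm end}\,v)$. $P_0(u)=\{\alpha\in(0,1): \lim_{\beta\to\alpha}H([u]_\beta,[u]_\alpha)\neq0\}$, i.e. the set of $\alpha\in(0,1)$ at which it is not the case that $H([u]_\beta,[u]_\alpha)\to0$ as $\beta\to\alpha$. *)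

From mathcomp Require Import all_boot all_order all_algebra.
From mathcomp Require Import all_classical all_reals all_analysis.
Set Implicit Arguments. Unset Strict Implicit. Unset Printing Implicit Defensive.
Import Order.TTheory GRing.Theory Num.Theory.
Local Open Scope classical_set_scope.
Local Open Scope ring_scope.

Section Fuzzy.
Variable R : realType.

Definition is_metric (Y : Type) (rho : Y -> Y -> R) : Prop :=
  (forall x y, 0 <= rho x y) /\
  (forall x y, rho x y = 0 <-> x = y) /\
  (forall x y, rho x y = rho y x) /\
  (forall x y z, rho x z <= rho x y + rho y z).

Definition mclosure (Y : Type) (rho : Y -> Y -> R) (A : set Y) : set Y :=
  [set x | forall e : R, 0 < e -> exists2 y, A y & rho x y < e].

Definition mclosed (Y : Type) (rho : Y -> Y -> R) (A : set Y) : Prop :=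
  mclosure rho A `<=` A.

Definition hausdorff (Y : Type) (rho : Y -> Y -> R) (U V : set Y) : \bar R :=
  Order.max
    (ereal_sup [set ereal_inf [set (rho a b)%:E | b in V] | a in U])
    (ereal_sup [set ereal_inf [set (rho a b)%:E | a in U] | b in V]).

Variable X : Type.
Variable d : X -> X -> R.

Definition acut (u : X -> R) (a : R) : set X :=
  if 0 < a then [set x | a <= u x] else mclosure d [set x | 0 < u x].

Definition F_USC (u : X -> R) : Prop :=
  (forall x, 0 <= u x <= 1) /\
  (forall a : R, 0 <= a <= 1 -> acut u a !=set0 /\ mclosed d (acut u a)).

Definition dbar (p q : X * R) : R := d p.1 q.1 + `|p.2 - q.2|.

Definition endo (u : X -> R) : set (X * R) :=
  [set p | 0 <= p.2 <= 1 /\ p.2 <= u p.1].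

Definition H_end (u v : X -> R) : \bar R := hausdorff dbar (endo u) (endo v).

Definition P0 (u : X -> R) : set R :=
  [set a | 0 < a < 1 /\
     ~ ((fun b : R => hausdorff d (acut u b) (acut u a)) @ a^' --> 0%E)].

End Fuzzy.

From mathcomp Require Import all_boot all_order all_algebra.
From mathcomp Require Import all_classical all_reals all_analysis.
From mathcomp Require Import lra.
Import Order.TTheory GRing.Theory Num.Theory.
Set Implicit Arguments.
Unset Strict Implicit.
Unset Printing Implicit Defensive.
Local Open Scope classical_set_scope.
Local Open Scope ring_scope.

(* Fix a level a outside P_0(u), a point x of [u_n]_a and a point z of [u]_a.
   The point (x, a) of end u_n is close to some (y, t) of end u; if t >= a then
   y already lies in [u]_a, and otherwise t is close to a, so y is close to
   [u]_a by continuity of the cuts at a.  Conversely, continuity at a puts z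
   close to some y of a slightly higher cut [u]_b, and the point of end u_n
   close to (y, b) has level above a, i.e. lies in [u_n]_a. *)

Section HausdorffDistance.
Variables (R : realType) (Y : Type) (rho : Y -> Y -> R).

Lemma hausdorff_lt_approx U V e : (hausdorff rho U V < e%:E)%E ->
  (forall a, U a -> exists2 b, V b & rho a b < e) /\
  (forall b, V b -> exists2 a, U a & rho a b < e).
Proof.
rewrite /hausdorff gt_max => /andP[UV VU]; split.
- move=> a Ua.
  have : (ereal_inf [set (rho a b)%:E | b in V] < e%:E)%E.
    by apply: le_lt_trans UV; apply: ereal_sup_ubound; exists a.
  by move/ereal_inf_lt => [_ [b Vb <-]]; rewrite lte_fin; exists b.
- move=> b Vb.
  have : (ereal_inf [set (rho a b)%:E | a in U] < e%:E)%E.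
    by apply: le_lt_trans VU; apply: ereal_sup_ubound; exists b.
  by move/ereal_inf_lt => [_ [a Ua <-]]; rewrite lte_fin; exists a.
Qed.

Lemma hausdorff_le_approx U V e :
  (forall a, U a -> exists2 b, V b & rho a b < e) ->
  (forall b, V b -> exists2 a, U a & rho a b < e) ->
  (hausdorff rho U V <= e%:E)%E.
Proof.
move=> UV VU; rewrite /hausdorff ge_max; apply/andP; split.
- apply: ge_ereal_sup => _ [a Ua <-]; have [b Vb ab] := UV a Ua.
  by apply: ge_ereal_inf; exists (rho a b)%:E; [exists b | rewrite lee_fin ltW].
- apply: ge_ereal_sup => _ [b Vb <-]; have [a Ua ab] := VU b Vb.
  by apply: ge_ereal_inf; exists (rho a b)%:E; [exists a | rewrite lee_fin ltW].
Qed.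

Lemma hausdorff_ge0 U V : (forall x y, 0 <= rho x y) -> V !=set0 ->
  (0 <= hausdorff rho U V)%E.
Proof.
move=> rho_ge0 [v Vv]; rewrite /hausdorff le_max; apply/orP; right.
apply: (@le_trans _ _ (ereal_inf [set (rho a v)%:E | a in U])).
  by apply: le_ereal_inf_tmp => _ [a Ua <-]; rewrite lee_fin.
by apply: ereal_sup_ubound; exists v.
Qed.

End HausdorffDistance.

Section ExtendedRealLimits.
Variables (R : realType) (T : Type) (F : set_system T) (FF : Filter F).
Variable f : T -> \bar R.

Lemma cvge0_eventually_lt : f @ F --> 0%E ->
  forall e : R, 0 < e -> \forall t \near F, (f t < e%:E)%E.
Proof.
by move=> f0 e e_gt0; apply: (f0 (fun x => x < e%:E)%E); apply: open_ereal_lt'.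
Qed.

Lemma cvge0_of_eventually_le : (forall t, 0 <= f t)%E ->
  (forall e : R, 0 < e -> \forall t \near F, (f t <= e%:E)%E) -> f @ F --> 0%E.
Proof.
move=> f_ge0 f_small.
have fin_of_le e t : (f t <= e%:E)%E -> f t \is a fin_num.
  by move=> fte; rewrite ge0_fin_numE // (le_lt_trans fte) ?ltry.
apply/fine_cvgP; split; first exact: filterS (@fin_of_le 1) (f_small 1 ltr01).
apply/cvgrPdist_lt => e e_gt0.
have e2_gt0 : 0 < e / 2 by rewrite divr_gt0.
apply: filterS (f_small _ e2_gt0) => t fte.
rewrite sub0r normrN ger0_norm ?fine_ge0 //.
rewrite -lte_fin fineK ?(fin_of_le _ _ fte) //.
by apply: le_lt_trans fte _; rewrite lte_fin ltr_pdivrMr // ltr_pMr // ltr1n.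
Qed.

End ExtendedRealLimits.

Section Cuts.
Variables (R : realType) (X : Type) (d : X -> X -> R).
Hypothesis d_ge0 : forall x y, 0 <= d x y.
Hypothesis d_triangle : forall x y z, d x z <= d x y + d y z.

Lemma acut_pos (v : X -> R) b x : 0 < b -> acut d v b x = (b <= v x).
Proof. by move=> b_gt0; rewrite /acut b_gt0. Qed.

Lemma endo_acut (v : X -> R) b x : 0 < b -> b <= 1 -> acut d v b x ->
  endo v (x, b).
Proof.
by move=> b_gt0 b_le1; rewrite acut_pos // => vb; split; rewrite //= ltW.
Qed.

Lemma dbar_lt (p q : X * R) eta : dbar d p q < eta ->
  d p.1 q.1 < eta /\ `|p.2 - q.2| < eta.
Proof.
rewrite /dbar => pq; split; apply: le_lt_trans pq.
  by rewrite lerDl normr_ge0.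
by rewrite lerDr d_ge0.
Qed.

Lemma not_P0_acut_continuous (u : X -> R) a e :
  0 < e -> 0 < a < 1 -> ~ P0 d u a ->
  exists2 r : R, 0 < r & forall b, `|a - b| < r -> b != a ->
    (hausdorff d (acut d u b) (acut d u a) < e%:E)%E.
Proof.
move=> e_gt0 a01 notP0.
have cut_cvg : (fun b => hausdorff d (acut d u b) (acut d u a)) @ a^' --> 0%E.
  by apply: contrapT => not_cvg; apply: notP0.
have := cvge0_eventually_lt cut_cvg e_gt0.
by rewrite near_withinE => /nbhs_ballP[r r_gt0 near_a]; exists r.
Qed.

Lemma acut_approx_by_lower_cuts (v u : X -> R) a eta e :
  0 < a -> a <= 1 -> eta <= a -> 0 < e ->
  (forall p, endo v p -> exists2 q, endo u q & dbar d p q < eta) ->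
  (forall t, a - eta < t < a ->
     forall y, acut d u t y -> exists2 z, acut d u a z & d y z < e) ->
  forall x, acut d v a x -> exists2 z, acut d u a z & d x z < eta + e.
Proof.
move=> a_gt0 a_le1 eta_le_a e_gt0 vu lower_cuts x vx.
have [[y t] [/= _ ty] /dbar_lt[/= xy]] := vu _ (endo_acut a_gt0 a_le1 vx).
rewrite ltr_norml => /andP[at_lo at_hi].
have [a_le_t|t_lt_a] := leP a t.
  by exists y; [rewrite acut_pos // (le_trans a_le_t ty) | lra].
have t_gt0 : 0 < t by lra.
have t_near_a : a - eta < t < a by apply/andP; split; lra.
have uty : acut d u t y by rewrite acut_pos.
have [z uz yz] := lower_cuts t t_near_a y uty.
by exists z => //; have := d_triangle x y z; lra.
Qed.

Lemma acut_approx_by_upper_cut (v u : X -> R) a b eta e :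
  0 < a -> 0 <= eta -> a + eta <= b -> b <= 1 ->
  (forall q, endo u q -> exists2 p, endo v p & dbar d p q < eta) ->
  (forall z, acut d u a z -> exists2 y, acut d u b y & d y z < e) ->
  forall z, acut d u a z -> exists2 x, acut d v a x & d x z < eta + e.
Proof.
move=> a_gt0 eta_ge0 b_ge b_le1 uv upper_cut z uz.
have b_gt0 : 0 < b by lra.
have [y uy yz] := upper_cut z uz.
have [[x t] [/= _ tx] /dbar_lt[/= xy]] := uv _ (endo_acut b_gt0 b_le1 uy).
rewrite ltr_norml => /andP[tb_lo _].
exists x; first by rewrite acut_pos //; lra.
by have := d_triangle x y z; lra.
Qed.

End Cuts.

Theorem theorem4p5 (R : realType) (X : Type) (d : X -> X -> R)
  (u : X -> R) (us : nat -> X -> R) :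
  is_metric d ->
  F_USC d u ->
  (forall n, F_USC d (us n)) ->
  ((fun n => H_end d (us n) u) @ \oo --> 0%E) ->
  forall a : R, 0 < a < 1 -> ~ P0 d u a ->
    (fun n => hausdorff d (acut d (us n) a) (acut d u a)) @ \oo --> 0%E.
Proof.
move=> [d_ge0 [_ [_ d_triangle]]] [_ u_cuts] _ end_cvg a a01 notP0.
have /andP[a_gt0 a_lt1] := a01.
have [ua_neq0 _] : acut d u a !=set0 /\ mclosed d (acut d u a).
  by apply: u_cuts; rewrite !ltW.
apply: cvge0_of_eventually_le => [n|e e_gt0]; first exact: hausdorff_ge0.
have e2_gt0 : 0 < e / 2 by rewrite divr_gt0.
have [r r_gt0 cut_cont] := not_P0_acut_continuous e2_gt0 a01 notP0.
have [eta eta_gt0 [eta_r eta_1a eta_a eta_e]] : exists2 eta : R, 0 < eta &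
    [/\ eta <= r / 2, eta <= 1 - a, eta <= a & eta <= e / 2].
  exists (Num.min (r / 2) (Num.min (1 - a) (Num.min a (e / 2)))).
    by rewrite !lt_min subr_gt0 a_gt0 a_lt1 e2_gt0 divr_gt0.
  by split; rewrite !ge_min lexx ?orbT.
apply: filterS (cvge0_eventually_lt end_cvg eta_gt0) => n.
move=> /hausdorff_lt_approx[vu uv].
apply: (@le_trans _ _ (eta + e / 2)%:E); last by rewrite lee_fin; lra.
apply: hausdorff_le_approx.
- apply: (acut_approx_by_lower_cuts d_ge0 d_triangle) => //; first exact: ltW.
  move=> t /andP[t_lo t_hi] y uy.
  have at_r : `|a - t| < r by rewrite ltr_norml; apply/andP; split; lra.
  have [lower _] := hausdorff_lt_approx (cut_cont t at_r (negbT (lt_eqF t_hi))).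
  exact: lower.
- apply: (acut_approx_by_upper_cut d_ge0 d_triangle (b := a + eta)) => //.
  + exact: ltW.
  + lra.
  move=> z uz.
  have ab_r : `|a - (a + eta)| < r by rewrite ltr_norml; apply/andP; split; lra.
  have b_neq_a : a + eta != a by rewrite gt_eqF // ltrDl.
  have [_ upper] := hausdorff_lt_approx (cut_cont _ ab_r b_neq_a).
  exact: upper.
Qed.
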